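(* Let $G=\mathrm{Spin}(2r+1)$ with $r\geqslant3$, let $\lambda\in\Lambda^+$ be such that $\alpha_r\notin\operatorname{Supp}(\lambda)$, and let $\lambda^{\mathrm{lb}}_{\mathrm{ad}}\in\mathrm{LB}(\lambda)$ be the adjoint little brother of $\lambda$, i.e. $\lambda^{\mathrm{lb}}_{\mathrm{ad}}=\lambda-(\alpha_p+\alpha_{p+1}+\cdots+\alpha_r)$ where $p=\max\{i<r:\alpha_i\in\operatorname{Supp}(\lambda)\}$ (assumed to exist). Then $\lambda^{\mathrm{lb}}_{\mathrm{ad}}\in\mathrm{LB}_G(\lambda)$.
   Context: $G=\mathrm{Spin}(2r+1)$ over an algebraically closed field of characteristic zero (simply connected, $\mathcal{X}(T)=\Lambda$), $T\subset B$ a maximal torus and Borel subgroup, $\Phi^+$ the positive roots, simple roots $\alpha_1,\dots,\alpha_r$ numbered as in Bourbaki (type $\mathsf{B}_r$, $\alpha_r$ the short simple root), $\Lambda^+$ the dominant weights. $\Pi^+(\lambda)=\{\mu\in\Lambda^+:\lambda-\mu\in\mathbb{N}[\Delta]\}$, $\Pi_G^+(\lambda)=\{\mu\in\Lambda^+:\lambda-\mu\in\mathbb{Q}_{\geq0}[\Delta]\}$; $\operatorname{Supp}(\lambda)=\{\alpha\in\Delta:\langle\lambda,\alpha^\vee\rangle\neq0\}$; $\Phi^+(\lambda)$ is the set of positive roots whose expression in simple roots involves some element of $\operatorname{Supp}(\lambda)$; $\nu\leqslant^\lambda_\mathbb{Q}\mu$ iff $\mu-\nu\in\mathbb{Q}_{\geq0}[\Phi^+(\lambda)]$.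 $\mathrm{LB}(\lambda)$ is the set of adjoint little brothers (here $\{\lambda^{\mathrm{lb}}_{\mathrm{ad}}\}$ when $\lambda\neq0$ and $\alpha_r\notin\operatorname{Supp}(\lambda)$), and $\mathrm{LB}_G(\lambda)$ is the set of elements of $(\Pi_G^+(\lambda)\smallsetminus\Pi^+(\lambda))\cup\mathrm{LB}(\lambda)$ maximal in this set w.r.t. $\leqslant^\lambda_\mathbb{Q}$. *)

(* Conventions: simple roots alpha_1..alpha_r (Bourbaki) are indexed by
   ordinals k : 'I_r with k <-> alpha_(k+1); so alpha_r (short) is index r-1.
   Weights are written in the basis of fundamental weights (X(T) = Lambda, since
   G is simply connected): a weight is l : 'I_r -> int, l = sum_i (l i) omega_(i+1),
   so (l i) = <l, alpha_(i+1)^vee>. *)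
From mathcomp Require Import all_boot all_order all_algebra.
Set Implicit Arguments.
Unset Strict Implicit.
Unset Printing Implicit Defensive.
Import GRing.Theory Num.Theory.
Local Open Scope ring_scope.

Definition weight (r : nat) := 'I_r -> int.

(* Cartan matrix of B_r: cartanB i j = <alpha_(j+1), alpha_(i+1)^vee>, so that the
   omega-coordinates of alpha_(j+1) form the column j. *)
Definition cartanB (r : nat) (i j : 'I_r) : int :=
  if i == j then 2
  else if (i.+1 == r)%N && (j.+2 == r)%N then -2
  else if (i.+1 == j)%N || (j.+1 == i)%N then -1
  else 0.

Definition dominant (r : nat) (l : weight r) : Prop := forall i, 0 <= l i.

Definition PiPlus (r : nat) (l mu : weight r) : Prop :=
  dominant mu /\
  exists c : 'I_r -> nat,
    forall i, l i - mu i = \sum_(j < r) (c j)%:Z * cartanB i j.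

Definition PiGPlus (r : nat) (l mu : weight r) : Prop :=
  dominant mu /\
  exists c : 'I_r -> rat, (forall j, 0 <= c j) /\
    forall i, ((l i - mu i)%:~R : rat) = \sum_(j < r) c j * (cartanB i j)%:~R.

(* Positive roots of B_r, given by their coefficients on the simple roots
   (Bourbaki, Planche II), indexed by triples (a, b, t) with a,b : 'I_r:
   - t = false, a <= b : alpha_(a+1) + ... + alpha_(b+1)
       (these are eps_(a+1) - eps_(b+2) and eps_(a+1));
   - t = true,  a < b  : alpha_(a+1)+...+alpha_b + 2(alpha_(b+1)+...+alpha_r)
       (these are eps_(a+1) + eps_(b+1)). *)
Notation PRidx r := ('I_r * 'I_r * bool)%type.

Definition valid_pr (r : nat) (x : PRidx r) : bool :=
  let: (a, b, t) := x in if t then (a < b)%N else (a <= b)%N.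

Definition proot (r : nat) (x : PRidx r) (k : 'I_r) : nat :=
  let: (a, b, t) := x in
  if t then (if (k < a)%N then 0%N else if (k < b)%N then 1%N else 2%N)
  else (if (a <= k)%N && (k <= b)%N then 1%N else 0%N).

Definition PhiPlus (r : nat) (l : weight r) (x : PRidx r) : Prop :=
  valid_pr x /\ exists k : 'I_r, (proot x k != 0)%N /\ l k != 0.

Definition leQ (r : nat) (l nu mu : weight r) : Prop :=
  exists d : PRidx r -> rat,
    (forall x, 0 <= d x) /\ (forall x, d x != 0 -> PhiPlus l x) /\
    forall i, ((mu i - nu i)%:~R : rat) =
      \sum_(x : PRidx r) d x * \sum_(j < r) ((proot x j)%:R * (cartanB i j)%:~R).

Definition alphar_notin_supp (r : nat) (l : weight r) : Prop :=
  forall i : 'I_r, i.+1 = r -> l i = 0.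

(* p (0-based) is the largest index of a simple root alpha_(p+1) in Supp(l)
   with p+1 < r, i.e. Bourbaki p+1 = max{ i < r : alpha_i in Supp(l) }. *)
Definition max_supp (r : nat) (l : weight r) (p : 'I_r) : Prop :=
  (p.+1 < r)%N /\ l p != 0 /\
  forall i : 'I_r, (p < i)%N -> (i.+1 < r)%N -> l i = 0.

Definition lb_ad (r : nat) (l : weight r) (p : 'I_r) : weight r :=
  fun i => l i - \sum_(j < r | (p <= j)%N) cartanB i j.

Definition LB (r : nat) (l nu : weight r) : Prop :=
  (exists i, l i != 0) /\ alphar_notin_supp l /\
  exists p, max_supp l p /\ forall i, nu i = lb_ad l p i.

Definition LBcand (r : nat) (l nu : weight r) : Prop :=
  (PiGPlus l nu /\ ~ PiPlus l nu) \/ LB l nu.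

Definition LB_G (r : nat) (l nu : weight r) : Prop :=
  LBcand l nu /\
  forall nu', LBcand l nu' -> leQ l nu nu' -> forall i, nu' i = nu i.

(* If nu is a candidate with lb <=_Q nu, then x := l - nu = sum_k c_k alpha_k where
   c = [p <= k] - g with g >= 0,
   and c >= 0 because nu is in Pi^+_G(l).  Hence 0 <= c_k <= 1, c_k = 0 for k < p, and
   <x, alpha_i^vee> = - nu_i <= 0 for i > p.  In the epsilon-basis the coordinates of
   the weight x pairwise differ by integers and twice the last one is an integer; so either
   they are all integers, the partial sums c_k are integers in [0, 1] and nu is in Pi^+(l),
   or p = 1 and c_1 = 1/2, which the next two (nonpositive) epsilon-coordinates forbid
   once r >= 3.  The only remaining candidate is a little brother, and it is unique. *)

From mathcomp Require Import all_boot all_order all_algebra.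
From mathcomp Require Import zify ring lra.
Set Implicit Arguments. Unset Strict Implicit. Unset Printing Implicit Defensive.
Import GRing.Theory Num.Theory.
Local Open Scope ring_scope.

Definition ext0 (R : nmodType) r (v : 'I_r -> R) (k : nat) : R := oapp v 0 (insub k).

Section ExtensionByZero.
Variables (R : nmodType) (r : nat) (v : 'I_r -> R).

Lemma ext0_ord (j : 'I_r) : ext0 v j = v j.
Proof. by rewrite /ext0 valK. Qed.

Lemma ext0_out k : (r <= k)%N -> ext0 v k = 0.
Proof. by move=> hk; rewrite /ext0 insubF // ltnNge hk. Qed.

End ExtensionByZero.

(* For x = sum_k c k * alpha_(k+1): with alpha_k = eps_k - eps_(k+1) (k < r) and
   alpha_r = eps_r, [eps_coord c k] is the coordinate of x on eps_(k+1), and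
   [omega_coord r c i] is <x, alpha_(i+1)^vee>. *)
Definition eps_coord (R : zmodType) (c : nat -> R) (k : nat) : R :=
  c k - if k is k'.+1 then c k' else 0.

Definition omega_coord (R : zmodType) r (c : nat -> R) (i : nat) : R :=
  if (i.+1 < r)%N then eps_coord c i - eps_coord c i.+1 else eps_coord c i *+ 2.

Lemma sum_mul_indicator (R : nzSemiRingType) r (v : 'I_r -> R) (m : nat) :
  \sum_(j < r) v j * (j == m :> nat)%:R = ext0 v m.
Proof.
rewrite (eq_bigr (fun j : 'I_r => if j == m :> nat then ext0 v j else 0)).
  by rewrite -big_mkcond big_ord1_eq; case: ltnP => // /ext0_out ->.
by move=> j _; rewrite ext0_ord; case: eqP; rewrite ?mulr1 ?mulr0.
Qed.

Lemma cartanBE (R : comNzRingType) r (i j : 'I_r) :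
  (cartanB i j)%:~R = 2 * (j == i :> nat)%:R
    - (if i.+1 == r then 2 else 1) * (j.+1 == i)%:R - (j == i.+1 :> nat)%:R :> R.
Proof.
rewrite /cartanB; have -> : (i == j) = (i == j :> nat) by [].
move: (i : nat) (j : nat) (ltn_ord i) (ltn_ord j) => a b ha hb.
case: (a =P b) => ?; case: (b =P a) => ?; case: (a.+1 =P r) => ?;
  case: (b.+2 =P r) => ?; case: (a.+1 =P b) => ?; case: (b.+1 =P a) => ?;
  case: (b =P a.+1) => ? /=; (try by exfalso; lia); ring.
Qed.

Lemma sum_cartanB (R : comNzRingType) r (v : 'I_r -> R) (i : 'I_r) :
  \sum_(j < r) v j * (cartanB i j)%:~R = omega_coord r (ext0 v) i.
Proof.
set k : R := if i.+1 == r then 2 else 1.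
have pred_indicator (j : 'I_r) :
    (j.+1 == i)%:R = (0 < i)%N%:R * (j == i.-1 :> nat)%:R :> R.
  by case: (i : nat) => [|m] /=; rewrite ?mul0r ?mul1r // eqSS.
under eq_bigr => j _ do rewrite cartanBE pred_indicator.
rewrite (eq_bigr (fun j => 2 * (v j * (j == i :> nat)%:R)
   - k * (0 < i)%N%:R * (v j * (j == i.-1 :> nat)%:R)
   - v j * (j == i.+1 :> nat)%:R)); last first.
  move=> j _; rewrite !mulrBr mulrCA; congr (_ - _ - _).
  by rewrite mulrCA (mulrCA (v j)) mulrA.
rewrite !sumrB -!mulr_sumr !sum_mul_indicator /omega_coord /eps_coord /k.
case: (ltnP i.+1 r) => hi.
  by rewrite (ltn_eqF hi); case: (i : nat) => [|m] /=; ring.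
rewrite (ext0_out v hi) (_ : i.+1 == r) ?eqn_leq ?hi ?ltn_ord //.
by case: (i : nat) => [|m] /=; ring.
Qed.

Section IntegerPoints.
Variable R : archiNumDomainType.

Lemma int_num_0_or_1 (x : R) : x \is a Num.int -> 0 <= x -> x <= 1 -> x = 0 \/ x = 1.
Proof.
move=> /intrP[m ->]; rewrite ler0z -[1 : R]/(1%:~R) ler_int => m_ge0 m_le1.
have [->|->] : m = 0 \/ m = 1 by lia.
- by left.
- by right.
Qed.

Lemma int_num_ge1 (x : R) : x \is a Num.int -> 0 < x -> 1 <= x.
Proof. by move=> /intrP[m ->]; rewrite ltr0z -[1 : R]/(1%:~R) ler_int; lia. Qed.

End IntegerPoints.

Section EpsilonCoordinates.
Variables (R : zmodType) (r : nat) (c : nat -> R).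

Lemma sum_eps_coord k : \sum_(i < k.+1) eps_coord c i = c k.
Proof.
elim: k => [|k IH]; first by rewrite big_ord1 /eps_coord subr0.
by rewrite big_ord_recr IH /= /eps_coord addrC subrK.
Qed.

Lemma eps_coordB m n : (m <= n < r)%N ->
  eps_coord c m - eps_coord c n = \sum_(m <= i < n) omega_coord r c i.
Proof.
case/andP=> le_mn lt_nr.
rewrite (@telescope_sumr_eq _ _ _ (fun k => - eps_coord c k)) // => [|i /andP[_ lt_in]].
  by rewrite opprK addrC.
by rewrite /omega_coord ifT ?opprK 1?addrC //; lia.
Qed.

Lemma eps_coord_omega k : (k < r)%N ->
  eps_coord c k *+ 2 = omega_coord r c r.-1 + (\sum_(k <= i < r.-1) omega_coord r c i) *+ 2.
Proof.
move=> lt_kr; rewrite -eps_coordB; last by lia.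
rewrite /omega_coord ifF; last by lia.
by rewrite -mulrnDl addrC subrK.
Qed.

End EpsilonCoordinates.

Section ZeroOneCoefficients.
Variables (R : archiRealFieldType) (r p : nat) (c : nat -> R).
Hypotheses (r_gt2 : (2 < r)%N) (c_low : forall k, (k < p)%N -> c k = 0)
  (c_box : forall k, (k < r)%N -> 0 <= c k <= 1)
  (omega_int : forall i, (i < r)%N -> omega_coord r c i \is a Num.int)
  (omega_le0 : forall i, (p < i < r)%N -> omega_coord r c i <= 0).

Lemma eps_coord_le0 k : (p < k < r)%N -> eps_coord c k <= 0.
Proof.
move=> /andP[lt_pk lt_kr]; have := eps_coord_omega c lt_kr.
have last_le0 : omega_coord r c r.-1 <= 0 by apply: omega_le0; lia.
have sum_le0 : \sum_(k <= i < r.-1) omega_coord r c i <= 0.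
  rewrite big_nat_cond; apply: sumr_le0 => i /andP[/andP[le_ki lt_ir] _].
  by apply: omega_le0; lia.
rewrite !mulr2n; lra.
Qed.

Lemma eps_coord_int_diff k : (k < r)%N -> eps_coord c 0 - eps_coord c k \is a Num.int.
Proof.
move=> lt_kr; rewrite (@eps_coordB _ r) ?lt_kr //.
by rewrite big_nat_cond; apply: rpred_sum => i /andP[/andP[_ lt_ik] _]; apply: omega_int; lia.
Qed.

Lemma eps_coord0_int : eps_coord c 0 \is a Num.int.
Proof.
have e0E : eps_coord c 0 = c 0 by rewrite /eps_coord subr0.
case: (posnP p) => [p0 | p_gt0]; last by rewrite e0E c_low.
have two_e0_int : eps_coord c 0 *+ 2 \is a Num.int.
  rewrite (@eps_coord_omega _ r); last by lia.
  rewrite rpredD ?rpredMn ?omega_int //; first by lia.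
  rewrite big_nat_cond; apply: rpred_sum => i /andP[/andP[_ lt_ir] _].
  by apply: omega_int; lia.
have /andP[c0_ge0 c0_le1] := c_box (ltnW (ltnW r_gt2)).
have [e0_0 | e0_half | e0_1] : [\/ eps_coord c 0 *+ 2 = 0, eps_coord c 0 *+ 2 = 1
    | eps_coord c 0 *+ 2 = 2].
- have w_ge0 : 0 <= eps_coord c 0 *+ 2 by rewrite mulr2n e0E; lra.
  case: (lerP (eps_coord c 0 *+ 2) 1) => [w_le1 | w_gt1].
    by case: (int_num_0_or_1 two_e0_int w_ge0 w_le1) => ->; [constructor 1 | constructor 2].
  have w1_int : eps_coord c 0 *+ 2 - 1 \is a Num.int by rewrite rpredB ?int_num1.
  have := int_num_ge1 w1_int; rewrite subr_gt0 => /(_ w_gt1).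
  by move: w_gt1; rewrite mulr2n e0E => *; constructor 3; lra.
- have -> : eps_coord c 0 = 0 by move: e0_0; rewrite mulr2n; lra.
  exact: rpred0.
- exfalso.
  have e1_le0 : eps_coord c 1 <= 0 by apply: eps_coord_le0; rewrite p0; lia.
  have e2_le0 : eps_coord c 2 <= 0 by apply: eps_coord_le0; rewrite p0; lia.
  have d1_ge1 := int_num_ge1 (eps_coord_int_diff (ltnW r_gt2)).
  have d2_ge1 := int_num_ge1 (eps_coord_int_diff r_gt2).
  have c2E : c 2 = eps_coord c 0 + eps_coord c 1 + eps_coord c 2.
    by rewrite -sum_eps_coord !big_ord_recr big_ord0 /= add0r.
  have /andP[c2_ge0 _] := c_box r_gt2.
  move: e0_half; rewrite mulr2n => e0_half.
  have := d1_ge1 ltac:(lra); have := d2_ge1 ltac:(lra); lra.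
- have -> : eps_coord c 0 = 1 by move: e0_1; rewrite mulr2n; lra.
  exact: rpred1.
Qed.

Lemma coef_0_or_1 k : (k < r)%N -> c k = 0 \/ c k = 1.
Proof.
move=> lt_kr; have /andP[ck_ge0 ck_le1] := c_box lt_kr.
apply: int_num_0_or_1 => //; rewrite -sum_eps_coord; apply: rpred_sum => i _.
have -> : eps_coord c i = eps_coord c 0 - (eps_coord c 0 - eps_coord c i).
  by rewrite opprB addrC subrK.
by rewrite rpredB ?eps_coord0_int ?eps_coord_int_diff //; exact: leq_trans (ltn_ord i) lt_kr.
Qed.

End ZeroOneCoefficients.

Lemma omega_coord_eq0 (R : numDomainType) r (c : nat -> R) :
  (forall i, (i < r)%N -> omega_coord r c i = 0) -> forall k, (k < r)%N -> c k = 0.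
Proof.
move=> omega0 k lt_kr; rewrite -sum_eps_coord; apply: big1 => i _.
have lt_ir : (i < r)%N by exact: leq_trans (ltn_ord i) lt_kr.
suff : eps_coord c i *+ 2 == 0 by rewrite mulrn_eq0 => /eqP.
rewrite (@eps_coord_omega _ r) // omega0; last by lia.
rewrite big_nat_cond big1 ?mul0rn ?addr0 // => j /andP[/andP[_ lt_jr] _].
by apply: omega0; lia.
Qed.

Lemma cartanB_comb_inj (R : numDomainType) r (u v : 'I_r -> R) :
  (forall i, \sum_(j < r) u j * (cartanB i j)%:~R = \sum_(j < r) v j * (cartanB i j)%:~R) ->
  forall j, u j = v j.
Proof.
move=> same_comb j; apply/eqP; rewrite -subr_eq0; apply/eqP.
rewrite -(ext0_ord (fun j => u j - v j)); apply: (@omega_coord_eq0 _ r) => // i lt_ir.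
rewrite -[i]/(nat_of_ord (Ordinal lt_ir)) -sum_cartanB.
by under eq_bigr => k _ do rewrite mulrBl; rewrite sumrB same_comb subrr.
Qed.

Lemma leQ_simple_comb r (l nu mu : weight r) : leQ l nu mu ->
  exists g : 'I_r -> rat, (forall j, 0 <= g j) /\
    forall i, ((mu i - nu i)%:~R : rat) = \sum_(j < r) g j * (cartanB i j)%:~R.
Proof.
case=> d [d_ge0 [_ dE]].
exists (fun j => \sum_x d x * (proot x j)%:R); split.
  by move=> j; apply: sumr_ge0 => x _; rewrite mulr_ge0.
move=> i; rewrite dE; under eq_bigr => x _ do rewrite big_distrr.
rewrite exchange_big; apply: eq_bigr => j _; rewrite big_distrl.
by apply: eq_bigr => x _; exact: mulrA.
Qed.

Lemma lb_ad_comb r (l : weight r) (p i : 'I_r) :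
  ((l i - lb_ad l p i)%:~R : rat) = \sum_(j < r) (p <= j)%N%:R * (cartanB i j)%:~R.
Proof.
rewrite /lb_ad opprB addrC subrK rmorph_sum big_mkcond /=.
by apply: eq_bigr => j _; case: ifP; rewrite ?mul1r ?mul0r.
Qed.

Section MaxSupport.
Variables (r : nat) (l : weight r) (p : 'I_r).
Hypothesis p_max : max_supp l p.

Lemma max_supp_uniq q : max_supp l q -> q = p.
Proof.
have [lt_pr [lp_neq0 p_maxP]] := p_max; case=> lt_qr [lq_neq0 q_maxP].
case: (ltngtP q p) => [lt_qp | lt_pq | /val_inj //].
- by move: lp_neq0; rewrite q_maxP ?eqxx.
- by move: lq_neq0; rewrite p_maxP ?eqxx.
Qed.

Lemma max_supp_zero : alphar_notin_supp l -> forall i : 'I_r, (p < i)%N -> l i = 0.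
Proof.
have [_ [_ p_maxP]] := p_max; move=> l_notin i lt_pi.
case: (ltnP i.+1 r) => [lt_ir | le_ri]; first exact: p_maxP.
by apply: l_notin; apply/eqP; rewrite eqn_leq le_ri ltn_ord.
Qed.

Lemma lb_ad_LB : alphar_notin_supp l -> LB l (lb_ad l p).
Proof. by have [_ [lp_neq0 _]] := p_max; split; [exists p | split=> //; exists p]. Qed.

End MaxSupport.

Lemma PiPlus_of_le_lb_ad r (l nu : weight r) (p : 'I_r) :
    (2 < r)%N -> alphar_notin_supp l -> max_supp l p ->
  PiGPlus l nu -> leQ l (lb_ad l p) nu -> PiPlus l nu.
Proof.
move=> r_gt2 l_notin p_max [nu_dom [c [c_ge0 cE]]] /leQ_simple_comb[g [g_ge0 gE]].
have c_diff j : c j = (p <= j)%N%:R - g j.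
  apply: (@cartanB_comb_inj _ _ c (fun j => (p <= j)%N%:R - g j)) => {j} i.
  rewrite -cE.
  under eq_bigr => j _ do rewrite mulrBl; rewrite sumrB -(lb_ad_comb l) -gE -rmorphB /=.
  by congr intr; ring.
have omegaE i (lt_ir : (i < r)%N) :
    omega_coord r (ext0 c) i = ((l (Ordinal lt_ir) - nu (Ordinal lt_ir))%:~R : rat).
  by rewrite cE sum_cartanB.
have c01 k : (k < r)%N -> ext0 c k = 0 \/ ext0 c k = 1.
  apply: (@coef_0_or_1 _ r p) => // [{}k lt_kp | {}k lt_kr | i lt_ir | i /andP[lt_pi lt_ir]].
  - have lt_kr : (k < r)%N by exact: ltn_trans lt_kp (ltn_ord p).
    rewrite -[k]/(nat_of_ord (Ordinal lt_kr)) ext0_ord.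
    have := c_ge0 (Ordinal lt_kr); have := g_ge0 (Ordinal lt_kr).
    by rewrite c_diff leqNgt lt_kp /=; lra.
  - rewrite -[k]/(nat_of_ord (Ordinal lt_kr)) ext0_ord.
    have := c_ge0 (Ordinal lt_kr); have := g_ge0 (Ordinal lt_kr).
    by rewrite c_diff; case: (p <= k)%N => /= ? ?; apply/andP; split; lra.
  - by rewrite omegaE intr_int.
  - rewrite omegaE (max_supp_zero p_max) // sub0r rmorphN /= oppr_le0 ler0z.
    exact: nu_dom.
split=> //; exists (fun j => c j == 1) => i.
apply: (@intr_inj rat); rewrite cE rmorph_sum; apply: eq_bigr => j _ /=.
rewrite rmorphM /=; congr (_ * _).
by have := c01 j (ltn_ord j); rewrite ext0_ord => -[->|->].
Qed.

Theorem proposition2p16 (r : nat) (hr : (3 <= r)%N) (l : weight r)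
  (hl : dominant l) (hlr : alphar_notin_supp l) (p : 'I_r) (hp : max_supp l p) :
  LB_G l (lb_ad l p).
Proof.
split; first by right; exact: lb_ad_LB.
move=> nu [[nu_PiG nu_notPi] | [_ [_ [q [q_max nuE]]]]] le_nu i.
- by case: nu_notPi; exact: PiPlus_of_le_lb_ad le_nu.
- by rewrite nuE (max_supp_uniq hp q_max).
Qed.
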